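(* Let $n\ge1$, let $\sigma\in S_n$ have $d$ descents, and for $i,j\ge0$ let $c_{ij}^d$ be the number of ordered pairs $(\tau,\mu)\in S_n\times S_n$ such that $\tau$ has $i$ descents, $\mu$ has $j$ descents, and $\tau\mu=\sigma$. Then, as formal power series in $s,t$, $$\sum_{i,j\ge0}\frac{c_{ij}^d\,s^{i+1}t^{j+1}}{(1-s)^{n+1}(1-t)^{n+1}}=\sum_{a,b\ge0}\binom{n+ab-d-1}{n}s^at^b.$$ (In particular $c_{ij}^d$ depends on $\sigma$ only through $d$.)
   Context: For $\sigma\in S_n$, $\sigma$ has a descent at $i$ ($1\le i\le n-1$) if $\sigma(i+1)<\sigma(i)$. Binomial convention: $\binom{m}{n}=\frac{m(m-1)\cdots(m-n+1)}{n!}$ if $m\ge n$ and $\binom{m}{n}=0$ if $m<n$ (including negative $m$). *)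

From HB Require Import structures.
From mathcomp Require Import all_boot all_order all_algebra all_fingroup.
Set Implicit Arguments. Unset Strict Implicit. Unset Printing Implicit Defensive.

(* Number of descents of s : 'S_n.  Positions are 0-indexed: position i
   (0 <= i < n-1) is a descent iff s (i+1) < s i. *)
Definition des (n : nat) (s : 'S_n) : nat :=
  #|[set i : 'I_n | [exists j : 'I_n, (val j == i.+1) && (s j < s i)]]|.

Definition cnt (n : nat) (sigma : 'S_n) (i j : nat) : nat :=
  #|[set p : 'S_n * 'S_n |
      [&& des p.1 == i, des p.2 == j & [forall x, p.1 (p.2 x) == sigma x]]]|.

(* Binomial coefficient with the paper's convention:
   binom m k = m(m-1)...(m-k+1)/k! if m >= k, and 0 if m < k (m any integer). *)
Definition binomZ (m : int) (k : nat) : nat :=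
  match m with
  | Posz m' => 'C(m', k)   (* 'C(m',k) = 0 when m' < k *)
  | Negz _ => 0
  end.

(* Coefficient of s^a t^b of the formal power series
   sum_{i,j>=0} c_ij s^(i+1) t^(j+1) / ((1-s)^(n+1) (1-t)^(n+1)),
   using 1/(1-s)^(n+1) = sum_{k>=0} C(n+k, n) s^k. *)
Definition lhs_coef (n : nat) (sigma : 'S_n) (a b : nat) : nat :=
  \sum_(i < a) \sum_(j < b)
     cnt sigma i j * 'C(n + (a - i.+1), n) * 'C(n + (b - j.+1), n).

(* The proof goes through Stanley-Gessel "compatible functions".  A function
   h : [n] -> [N] is COMPATIBLE with p in S_n when listing h(p 0), ...,
   h(p (n-1)) gives an increasing sequence for the order "compare values,
   break ties by position"; equivalently, p is the standardization of h.  Adding to the j-th value the number of non-descents of p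
      before j is a bijection onto the strictly increasing n-tuples of
      [N + n - 1 - des p].
   2. Multiplicativity: the compatible functions of sigma into [b*a] are in
      bijection with pairs (Y, X), Y : [n] -> [a] compatible with some tau
      and X : [n] -> [b] compatible with tau^-1 o sigma, through the
      mixed-radix code h x = X (tau^-1 x) * a + Y x, where tau is the
      standardization of Y.  (The library writes tau^-1 o sigma as
      (sigma * tau^-1)%g.)
   3. Re-indexing: the coefficient of s^a t^b on the left-hand side is
      sum_tau C(n - 1 + a - des tau, n) * C(n - 1 + b - des (tau^-1 o sigma), n),
      since tau o mu = sigma forces mu = tau^-1 o sigma.
   Combining 1-3, the coefficient equals the number of compatible functions
   of sigma into [a*b], i.e. C(n - 1 + a*b - des sigma, n). *)

From HB Require Import structures.
From mathcomp Require Import all_boot all_order all_algebra all_fingroup.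
Set Implicit Arguments. Unset Strict Implicit. Unset Printing Implicit Defensive.

Lemma ltn_mixed_radix (A A' B B' M : nat) : B < M -> B' < M ->
  (A * M + B < A' * M + B') = (A < A') || ((A == A') && (B < B')).
Proof.
move=> ltBM ltB'M; case: (ltngtP A A') => [ltAA'|ltA'A|->] /=.
- apply: (leq_trans (n := A.+1 * M)); first by rewrite mulSn addnC ltn_add2r.
  by apply: leq_trans (leq_addr _ _); rewrite leq_mul2r ltAA' orbT.
- apply/negbTE; rewrite -leqNgt.
  apply: (leq_trans (n := A'.+1 * M)); first by rewrite mulSn addnC leq_add2r ltnW.
  by apply: leq_trans (leq_addr _ _); rewrite leq_mul2r ltA'A orbT.
- by rewrite ltn_add2l.
Qed.

Lemma mixed_radix_bound (a b x y : nat) : x < b -> y < a -> x * a + y < b * a.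
Proof.
move=> ltxb ltya; apply: (leq_trans (n := x.+1 * a)).
  by rewrite mulSn addnC ltn_add2r.
by rewrite leq_mul2r ltxb orbT.
Qed.

Lemma mixed_radix_inj (a x1 x2 y1 y2 : nat) : y1 < a -> y2 < a ->
  x1 * a + y1 = x2 * a + y2 -> x1 = x2 /\ y1 = y2.
Proof.
move=> lty1 lty2 E; have a_gt0 : 0 < a by apply: leq_ltn_trans lty1.
split.
  have := congr1 (fun z => z %/ a) E; rewrite /= !divnMDl // !divn_small //.
  by rewrite !addn0.
by have := congr1 (fun z => z %% a) E; rewrite /= !modnMDl !modn_small.
Qed.

Lemma incr_gap (f : nat -> nat) k : (forall j, j < k -> f j < f j.+1) ->
  forall i j, i <= j -> j <= k -> f i + (j - i) <= f j.
Proof.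
move=> f_incr i; elim=> [|j IH]; first by rewrite leqn0 => /eqP ->; rewrite subnn addn0.
rewrite leq_eqVlt => /orP [/eqP <- _|]; first by rewrite subnn addn0.
rewrite ltnS => leij ltjk.
have := IH leij (ltnW ltjk); rewrite subSn // addnS => IHj.
exact: leq_ltn_trans IHj (f_incr j ltjk).
Qed.

Lemma nondecr_mono (f : nat -> nat) k : (forall j, j < k -> f j <= f j.+1) ->
  forall i j, i <= j -> j <= k -> f i <= f j.
Proof.
move=> f_nondecr i j leij lejk.
apply: (@homo_leq_in _ [pred x | x <= k] f leq) => //; rewrite ?inE //.
- by move=> x y z; exact: leq_trans.
- by move=> x y _ /= leyk z /andP [_ ltzy]; exact: ltnW (leq_trans ltzy leyk).
- by move=> x _; rewrite inE => ltxk; exact: f_nondecr.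
- exact: leq_trans leij lejk.
Qed.

Lemma ltn_add_bool x y w (c : bool) :
  (x + w < y + (w + c)) = (x < y) || ((x == y) && c).
Proof.
rewrite (addnC w c) addnA ltn_add2r.
by case: c; rewrite /= ?addn1 ?addn0 ?ltnS ?andbT ?andbF ?orbF // leq_eqVlt orbC.
Qed.

Lemma card_ord_lt (n k : nat) : k <= n -> #|[set u : 'I_n | u < k]| = k.
Proof.
move=> lekn.
have -> : [set u : 'I_n | u < k] = [set widen_ord lekn i | i : 'I_k].
  apply/setP => u; rewrite inE; apply/idP/imsetP.
  - by move=> ltuk; exists (Ordinal ltuk); rewrite ?inE //; apply: val_inj.
  - by case=> i _ ->; exact: (ltn_ord i).
by rewrite card_imset ?card_ord // => i j /(congr1 val) /= /val_inj.
Qed.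

Lemma card_set_sum (T : finType) (P : pred T) :
  #|[set x | P x]| = \sum_(x : T) P x.
Proof.
rewrite -sum1dep_card big_mkcond /=; apply: eq_bigr => x _; by case: (P x).
Qed.

Lemma card_in_inj_eq (T1 T2 : finType) (A : {set T1}) (B : {set T2})
    (f : T1 -> T2) (g : T2 -> T1) :
  {in A &, injective f} -> (forall x, x \in A -> f x \in B) ->
  {in B &, injective g} -> (forall y, y \in B -> g y \in A) -> #|A| = #|B|.
Proof.
have card_le (U V : finType) (C : {set U}) (D : {set V}) (h : U -> V) :
    {in C &, injective h} -> (forall x, x \in C -> h x \in D) -> #|C| <= #|D|.
  move=> h_inj hCD; rewrite -(card_in_imset h_inj); apply: subset_leq_card.
  by apply/subsetP => y /imsetP [x xC ->]; apply: hCD.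
move=> f_inj fAB g_inj gBA; apply/eqP.
by rewrite eqn_leq (card_le _ _ _ _ f) // (card_le _ _ _ _ g).
Qed.

Lemma sum_ord_indicator (a x : nat) (F : nat -> nat) :
  \sum_(i < a) (x == i) * F i = (x < a) * F x.
Proof.
elim: a => [|a IH]; first by rewrite big_ord0.
rewrite big_ord_recr IH /=; case: (ltngtP x a) => [ltxa|ltax|->].
- by rewrite (leqW ltxa) mul0n addn0.
- by rewrite ltnS leqNgt ltax !mul0n.
- by rewrite ltnSn mul0n.
Qed.

Section Standardization.
Variable m : nat.
Local Notation n := m.+1.

(* Tie-broken value of f at x: compare f-values, then positions. *)
Definition tkey (f : 'I_n -> nat) (x : 'I_n) : nat := f x * n + x.

Definition sorts (p : 'S_n) (f : 'I_n -> nat) : bool :=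
  [forall j : 'I_m, tkey f (p (inord j)) < tkey f (p (inord j.+1))].

Lemma tkey_inj f : injective (tkey f).
Proof.
move=> x y /eqP; rewrite /tkey; case: (ltngtP (f x) (f y)) => [lt|lt|->].
- by rewrite eqn_leq andbC leqNgt (ltn_mixed_radix _ _ (ltn_ord x) (ltn_ord y)) lt.
- by rewrite eqn_leq leqNgt (ltn_mixed_radix _ _ (ltn_ord y) (ltn_ord x)) lt.
- by rewrite eqn_add2l => /eqP; apply: val_inj.
Qed.

Lemma sorts_ltn p f : sorts p f -> forall u v : 'I_n,
  (tkey f (p u) < tkey f (p v)) = (u < v).
Proof.
move=> /forallP p_sorts.
have incr i j : i < j -> j < n -> tkey f (p (inord i)) < tkey f (p (inord j)).
  elim: j => // j IH; rewrite ltnS leq_eqVlt => /orP [/eqP -> | ltij] ltjn.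
    exact: p_sorts (@Ordinal m j ltjn).
  exact: ltn_trans (IH ltij (ltnW ltjn)) (p_sorts (@Ordinal m j ltjn)).
move=> u v; case: (ltngtP u v) => [ltuv|ltvu|/val_inj ->]; last by rewrite ltnn.
  by have := incr _ _ ltuv (ltn_ord v); rewrite !inord_val.
apply/negbTE; rewrite -leqNgt ltnW //.
by have := incr _ _ ltvu (ltn_ord u); rewrite !inord_val.
Qed.

Definition rank (f : 'I_n -> nat) (x : 'I_n) : nat := #|[set y | tkey f y < tkey f x]|.

Lemma rank_lt f x : rank f x < n.
Proof.
rewrite /rank -[n in _ < n]card_ord; apply: proper_card; apply/properP.
by split; [apply/subsetP | exists x; rewrite ?inE ?ltnn].
Qed.

Lemma ltn_rank f x y : (rank f x < rank f y) = (tkey f x < tkey f y).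
Proof.
case: (ltnP (tkey f x) (tkey f y)) => lt_xy.
  apply: proper_card; apply/properP; split; last by exists x; rewrite !inE ?ltnn.
  by apply/subsetP => z; rewrite !inE => lt_zx; exact: ltn_trans lt_zx lt_xy.
apply/negbTE; rewrite -leqNgt; apply: subset_leq_card.
by apply/subsetP => z; rewrite !inE => lt_zy; exact: leq_trans lt_zy lt_xy.
Qed.

Definition rank_ord f x : 'I_n := Ordinal (rank_lt f x).

Lemma rank_ord_inj f : injective (rank_ord f).
Proof.
move=> x y /(congr1 val) /= E; apply: (@tkey_inj f).
by case: (ltngtP (tkey f x) (tkey f y)) => // lt; move: lt; rewrite -ltn_rank E ltnn.
Qed.

Definition stdz f : 'S_n := (perm (@rank_ord_inj f))^-1.

Lemma rank_stdz f k : rank f (stdz f k) = k.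
Proof. by have := permKV (perm (@rank_ord_inj f)) k; rewrite permE => /(congr1 val). Qed.

Lemma sorts_stdz f : sorts (stdz f) f.
Proof.
apply/forallP => j; have ltjm := ltn_ord j.
by rewrite -ltn_rank !rank_stdz !inordK // ltnS ltnW.
Qed.

Lemma sorts_stdz_eq p f : sorts p f -> p = stdz f.
Proof.
move=> p_sorts.
have rank_p k : rank f (p k) = k.
  rewrite /rank.
  have -> : [set y | tkey f y < tkey f (p k)] = p @: [set u : 'I_n | u < k].
    apply/setP => y; rewrite inE; apply/idP/imsetP.
    - move=> lt_y; exists ((p^-1)%g y); last by rewrite permKV.
      by rewrite inE -(sorts_ltn p_sorts) permKV.
    - by case=> u; rewrite inE => ltuk ->; rewrite (sorts_ltn p_sorts).
  by rewrite card_imset ?card_ord_lt 1?ltnW //; exact: perm_inj.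
apply/permP => k; apply: (@perm_inj _ (perm (@rank_ord_inj f))).
by rewrite permKV permE; apply: val_inj; exact: rank_p.
Qed.

End Standardization.

Section Descents.
Variable m : nat.
Local Notation n := m.+1.

Definition is_desc (p : 'S_n) (j : nat) : bool :=
  (j.+1 < n) && (p (inord j.+1) < p (inord j)).

Definition n_asc (p : 'S_n) (k : nat) : nat := \sum_(j < k) ~~ is_desc p j.

Lemma n_ascS p k : n_asc p k.+1 = n_asc p k + ~~ is_desc p k.
Proof. by rewrite /n_asc big_ord_recr. Qed.

Lemma n_asc_le p k : n_asc p k <= k.
Proof.
elim: k => [|k IH]; first by rewrite /n_asc big_ord0.
by rewrite n_ascS -addn1 leq_add //; case: is_desc.
Qed.

Lemma des_is_desc p : des p = \sum_(j < n) is_desc p j.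
Proof.
rewrite /des card_set_sum; apply: eq_bigr => i _; congr nat_of_bool.
apply/existsP/idP.
  by case=> j /andP [/eqP ji lt]; rewrite /is_desc -ji ltn_ord !inord_val.
case/andP => ltin lt; exists (inord i.+1); apply/andP; split.
  by apply/eqP; apply: inordK.
by rewrite -{2}(inord_val i).
Qed.

Lemma n_asc_des p : n_asc p m + des p = m.
Proof.
rewrite des_is_desc big_ord_recr /= {2}/is_desc ltnn /= addn0 /n_asc -big_split /=.
rewrite (eq_bigr (fun _ => 1)) ?sum_nat_const ?card_ord ?muln1 //.
by move=> i _; case: is_desc.
Qed.

Lemma des_le (p : 'S_n) : des p <= m.
Proof. by rewrite -{2}(n_asc_des p) leq_addl. Qed.

End Descents.

Section Counting.
Variable m : nat.
Local Notation n := m.+1.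

Definition compat (p : 'S_n) (N : nat) : {set {ffun 'I_n -> 'I_N}} :=
  [set h : {ffun 'I_n -> 'I_N} | sorts p (fun x => nat_of_ord (h x))].

(* p sorts g iff g o p, shifted by the count of non-descents, is strictly
   increasing: g (p j) <= g (p j.+1), strictly when j is a descent. *)
Lemma sorts_shift p (g : 'I_n -> nat) : sorts p g =
  [forall j : 'I_m, g (p (inord j)) + n_asc p j < g (p (inord j.+1)) + n_asc p j.+1].
Proof.
apply: eq_forallb => j; rewrite n_ascS ltn_add_bool.
rewrite /tkey (ltn_mixed_radix _ _ (ltn_ord _) (ltn_ord _)); congr (_ || (_ && _)).
have ltjm := ltn_ord j; have ltj1n : j.+1 < n by rewrite ltnS.
have neq : p (inord j) != p (inord j.+1) :> nat.
  rewrite (inj_eq val_inj) (inj_eq perm_inj); apply/eqP => /(congr1 (@nat_of_ord n)).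
  by rewrite (inordK (ltnW ltj1n)) (inordK ltj1n) => /n_Sn.
by rewrite /is_desc ltj1n /= ltnNge leq_eqVlt negb_or eq_sym neq.
Qed.

Lemma tnth_inord N (t : n.-tuple 'I_N) k : k < n ->
  nat_of_ord (tnth t (inord k)) = nth 0 (map val t) k.
Proof.
case: N t => [t|N t] ltkn; first by case: (tnth t (inord k)).
by rewrite (tnth_nth ord0) inordK // (nth_map ord0) // size_tuple.
Qed.

Lemma sorted_tuple N (t : n.-tuple 'I_N) :
  sorted ltn (map val t) =
  [forall j : 'I_m, nat_of_ord (tnth t (inord j)) < nat_of_ord (tnth t (inord j.+1))].
Proof.
apply/(sortedP 0)/forallP => t_incr j.
  have ltj1n : j.+1 < n by rewrite ltnS.
  rewrite (tnth_inord t (ltnW ltj1n)) (tnth_inord t ltj1n).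
  by apply: t_incr; rewrite size_map size_tuple.
rewrite size_map size_tuple => ltj1n.
by have := t_incr (@Ordinal m j ltj1n); rewrite /= (tnth_inord t (ltnW ltj1n)) (tnth_inord t ltj1n).
Qed.

Section ShiftBijection.
Variables (p : 'S_n) (N' : nat).
Local Notation N := N'.+1.
Local Notation M := (N' + n_asc p m).+1.

Definition incr_tuples : {set n.-tuple 'I_M} :=
  [set t : n.-tuple 'I_M | sorted ltn (map val t)].

Definition shift_up (g : {ffun 'I_n -> 'I_N}) : n.-tuple 'I_M :=
  [tuple (inord (g (p i) + n_asc p i) : 'I_M) | i < n].

Definition shift_down (t : n.-tuple 'I_M) : {ffun 'I_n -> 'I_N} :=
  [ffun x => inord (tnth t ((p^-1)%g x) - n_asc p ((p^-1)%g x))].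

Lemma shift_up_bound g : g \in compat p N -> forall i : 'I_n, g (p i) + n_asc p i < M.
Proof.
rewrite inE sorts_shift => /forallP g_sorted.
pose z j := (g (p (inord j)) : nat) + n_asc p j.
have z_incr j : j < m -> z j < z j.+1 by move=> ltjm; exact: g_sorted (Ordinal ltjm).
move=> i; have leim : i <= m by rewrite -ltnS.
have := incr_gap z_incr leim (leqnn m); rewrite /z inord_val => le_zi.
apply: leq_ltn_trans (leq_trans (leq_addr _ _) le_zi) _.
by rewrite ltnS leq_add2r -ltnS.
Qed.

(* The shift turns the weak increase of g o p into a strict one. *)
Lemma shift_up_in g : g \in compat p N -> shift_up g \in incr_tuples.
Proof.
move=> g_compat; have bound := shift_up_bound g_compat.
move: (g_compat); rewrite !inE sorts_shift sorted_tuple => /forallP g_sorted.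
apply/forallP => j; have ltj1n : j.+1 < n by rewrite ltnS.
rewrite !tnth_mktuple; have := bound (inord j); have := bound (inord j.+1).
rewrite (inordK (ltnW ltj1n)) (inordK ltj1n) => lt1 lt0.
by rewrite (inordK lt1) (inordK lt0); apply: g_sorted.
Qed.

Lemma shift_up_inj : {in compat p N &, injective shift_up}.
Proof.
move=> g1 g2 g1_compat g2_compat E; apply/ffunP => x.
have := congr1 (fun t => val (tnth t ((p^-1)%g x))) E.
rewrite /= !tnth_mktuple (inordK (shift_up_bound g1_compat _)).
rewrite (inordK (shift_up_bound g2_compat _)) permKV.
by move=> /eqP; rewrite eqn_add2r => /eqP /val_inj.
Qed.

Lemma incr_tuple_bounds t : t \in incr_tuples -> forall i : 'I_n,
  n_asc p i <= tnth t i /\ tnth t i - n_asc p i < N.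
Proof.
rewrite inE sorted_tuple => /forallP t_sorted.
pose z j := val (tnth t (inord j)).
have z_incr j : j < m -> z j < z j.+1 by move=> ltjm; exact: t_sorted (Ordinal ltjm).
have shift_le j : j <= m -> n_asc p j <= z j.
  move=> lejm; apply: leq_trans (n_asc_le p j) _.
  by have := incr_gap z_incr (leq0n j) lejm; rewrite subn0; apply: leq_trans; rewrite leq_addl.
have diff_nondecr j : j < m -> z j - n_asc p j <= z j.+1 - n_asc p j.+1.
  move=> ltjm; rewrite n_ascS -(subnDr (~~ is_desc p j) (z j)).
  apply: leq_sub2r; apply: leq_trans (z_incr j ltjm); rewrite -addn1 leq_add2l.
  by case: is_desc.
move=> i; have leim : i <= m by rewrite -ltnS.
have := shift_le i leim; have := nondecr_mono diff_nondecr leim (leqnn m).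
rewrite /z !inord_val => le_last le_shift; split => //.
apply: leq_ltn_trans le_last _; rewrite ltnS leq_subLR.
by apply: (leq_trans (n := N' + n_asc p m)); [exact: (ltn_ord (tnth t _)) | rewrite addnC].
Qed.

Lemma shift_down_in t : t \in incr_tuples -> shift_down t \in compat p N.
Proof.
move=> t_incr; have bounds := incr_tuple_bounds t_incr.
move: (t_incr); rewrite inE sorted_tuple => /forallP t_sorted.
rewrite inE sorts_shift; apply/forallP => j; have ltj1n : j.+1 < n by rewrite ltnS.
rewrite !ffunE !permK.
have [le0 lt0] := bounds (inord j); have [le1 lt1] := bounds (inord j.+1).
move: (t_sorted j) le0 le1 lt0 lt1; rewrite (inordK (ltnW ltj1n)) (inordK ltj1n).
by move=> lt_t le0 le1 lt0 lt1; rewrite (inordK lt0) (inordK lt1) !subnK.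
Qed.

Lemma shift_down_inj : {in incr_tuples &, injective shift_down}.
Proof.
move=> t1 t2 t1_incr t2_incr E; apply: eq_from_tnth => i; apply: val_inj.
have := congr1 (fun g : {ffun 'I_n -> 'I_N} => nat_of_ord (g (p i))) E.
rewrite /= !ffunE !permK.
have [le1 lt1] := incr_tuple_bounds t1_incr i; have [le2 lt2] := incr_tuple_bounds t2_incr i.
by rewrite (inordK lt1) (inordK lt2) => E'; rewrite -(subnK le1) -(subnK le2) E'.
Qed.

Lemma card_compat_tuples : #|compat p N| = #|incr_tuples|.
Proof. exact: card_in_inj_eq shift_up_inj shift_up_in shift_down_inj shift_down_in. Qed.

End ShiftBijection.

Lemma card_compat (p : 'S_n) N : #|compat p N| = 'C(m + N - des p, n).
Proof.
case: N => [|N'].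
  rewrite bin_small; last by rewrite addn0 ltnS leq_subr.
  apply/eqP; rewrite -leqn0; apply: leq_trans (max_card _) _.
  by rewrite card_ffun !card_ord exp0n.
rewrite card_compat_tuples card_ltn_sorted_tuples; congr 'C(_, _).
have := n_asc_des p; set w := n_asc p m; set d := des p => <-.
by rewrite addnAC addnK addnS addnC.
Qed.

End Counting.

Section Product.
Variables (m a b : nat).
Local Notation n := m.+1.

Definition mixed_radix (x : 'I_b) (y : 'I_a) : 'I_(b * a) :=
  Ordinal (mixed_radix_bound (ltn_ord x) (ltn_ord y)).

Definition stdz_fun (Y : {ffun 'I_n -> 'I_a}) : 'S_n := stdz (fun z => nat_of_ord (Y z)).

Definition pair_code (q : {ffun 'I_n -> 'I_a} * {ffun 'I_n -> 'I_b}) :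
  {ffun 'I_n -> 'I_(b * a)} :=
  [ffun x => mixed_radix (q.2 ((stdz_fun q.1)^-1%g x)) (q.1 x)].

(* The code determines Y (low digits), hence tau, hence X (high digits). *)
Lemma pair_code_inj : injective pair_code.
Proof.
move=> [Y1 X1] [Y2 X2] E.
have E' x : X1 ((stdz_fun Y1)^-1%g x) = X2 ((stdz_fun Y2)^-1%g x) /\ Y1 x = Y2 x.
  have := congr1 (fun h : {ffun 'I_n -> 'I_(b * a)} => nat_of_ord (h x)) E.
  rewrite /= !ffunE /= => /(mixed_radix_inj (ltn_ord _) (ltn_ord _)) [e1 e2].
  by split; apply: val_inj.
have EY : Y1 = Y2 by apply/ffunP => x; case: (E' x).
subst Y2; congr (_, _); apply/ffunP => u.
by have [+ _] := E' (stdz_fun Y1 u); rewrite permK.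
Qed.

(* pair_code is a bijection: both sides have (a * b)^n elements. *)
Lemma pair_code_bij : bijective pair_code.
Proof.
apply: inj_card_bij; first exact: pair_code_inj.
by rewrite card_prod !card_ffun !card_ord expnMn mulnC.
Qed.

(* Along tau = stdz Y, the code compares like X: Y is already sorted by tau. *)
Lemma tkey_pair_code Y X (u v : 'I_n) :
  let tau := stdz_fun Y in
  (tkey (fun x => nat_of_ord (pair_code (Y, X) x)) (tau u) <
   tkey (fun x => nat_of_ord (pair_code (Y, X) x)) (tau v)) =
  (tkey (fun x => nat_of_ord (X x)) u < tkey (fun x => nat_of_ord (X x)) v).
Proof.
move=> tau; rewrite /tkey !ffunE /= !permK !mulnDl -!mulnA -!addnA.
have bound (w : 'I_n) : Y (tau w) * n + tau w < a * n by apply: mixed_radix_bound.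
rewrite (ltn_mixed_radix _ _ (bound u) (bound v)).
rewrite (ltn_mixed_radix _ _ (ltn_ord u) (ltn_ord v)).
by have := sorts_ltn (sorts_stdz (fun z => nat_of_ord (Y z))) u v; rewrite /tkey => ->.
Qed.

Lemma pair_code_compat (sigma : 'S_n) Y X :
  (pair_code (Y, X) \in compat sigma (b * a)) =
  (X \in compat (sigma * (stdz_fun Y)^-1)%g b).
Proof.
rewrite !inE /sorts; apply: eq_forallb => j.
have sigmaE w : sigma w = stdz_fun Y (((sigma * (stdz_fun Y)^-1)%g) w).
  by rewrite permM permKV.
by rewrite (sigmaE (inord j)) (sigmaE (inord j.+1)) tkey_pair_code.
Qed.

Lemma card_compat_mul (sigma : 'S_n) :
  #|compat sigma (b * a)| =
  \sum_(tau : 'S_n) #|compat tau a| * #|compat (sigma * tau^-1)%g b|.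
Proof.
rewrite -sum1_card (reindex pair_code) /=; last exact: onW_bij pair_code_bij.
rewrite (eq_bigl (fun q => true && (q.2 \in compat (sigma * (stdz_fun q.1)^-1)%g b)));
  last by move=> [Y X]; rewrite pair_code_compat.
rewrite -(pair_big_dep xpredT (fun Y X => X \in compat (sigma * (stdz_fun Y)^-1)%g b)
                         (fun _ _ => 1)) /=.
under eq_bigr do rewrite sum1_card.
rewrite (partition_big stdz_fun xpredT) //=; apply: eq_bigr => tau _.
rewrite (eq_bigr (fun _ => #|compat (sigma * tau^-1)%g b|)); last by move=> Y /eqP ->.
rewrite (eq_bigl (fun Y => Y \in compat tau a)) ?sum_nat_const // => Y.
rewrite inE /=; apply/eqP/idP => [<-|Y_compat]; first exact: sorts_stdz.
by rewrite /stdz_fun -(sorts_stdz_eq Y_compat).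
Qed.

End Product.

Section Coefficients.
Variable m : nat.
Local Notation n := m.+1.

Lemma binomZ_nat (d N : nat) : d <= m ->
  binomZ ((n + N)%:Z - d%:Z - 1)%R n = 'C(m + N - d, n).
Proof.
move=> ledm; have le_d_mN : d <= m + N := leq_trans ledm (leq_addr _ _).
rewrite subzn; last by rewrite addSn leqW.
by rewrite -predn_int ?addSn ?subSn.
Qed.

(* The coefficient of s^a in s^(d+1) / (1-s)^(n+1). *)
Lemma coef_shifted_series a d : (d < a) * 'C(n + (a - d.+1), n) = 'C(m + a - d, n).
Proof.
case: (ltnP d a) => [ltda|leda] /=.
  by rewrite mul1n addSn -addnS subnSK // addnBA // ltnW.
by rewrite mul0n bin_small // ltnS leq_subLR addnC leq_add2r.
Qed.

Lemma comp_eq_mul (sigma tau mu : 'S_n) :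
  [forall x, tau (mu x) == sigma x] = (mu == (sigma * tau^-1)%g).
Proof.
apply/forallP/eqP => [comp_eq|->]; last by move=> x; rewrite permM permKV.
apply/permP => x; rewrite permM; apply: (@perm_inj _ tau).
by rewrite permKV; apply/eqP.
Qed.

Lemma cnt_weighted_sum (sigma : 'S_n) a b (F G : nat -> nat) :
  \sum_(i < a) \sum_(j < b) cnt sigma i j * F i * G j =
  \sum_(tau : 'S_n) ((des tau < a) * F (des tau)) *
                    ((des (sigma * tau^-1)%g < b) * G (des (sigma * tau^-1)%g)).
Proof.
pose C (q : 'S_n * 'S_n) : nat := [forall x, q.1 (q.2 x) == sigma x].
pose W (q : 'S_n * 'S_n) i j := C q * (((des q.1 == i) * F i) * ((des q.2 == j) * G j)).
transitivity (\sum_(i < a) \sum_(j < b) \sum_(q : 'S_n * 'S_n) W q i j).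
  apply: eq_bigr => i _; apply: eq_bigr => j _.
  rewrite /cnt card_set_sum !big_distrl /=; apply: eq_bigr => q _.
  rewrite /W /C; case: (des q.1 == i); case: (des q.2 == j); case: [forall x, _];
    by rewrite /= ?mul0n ?muln0 ?mul1n ?muln1.
rewrite exchange_big /=; under eq_bigr do rewrite exchange_big /=.
rewrite exchange_big /=.
transitivity (\sum_(q : 'S_n * 'S_n) C q *
  (((des q.1 < a) * F (des q.1)) * ((des q.2 < b) * G (des q.2)))).
  apply: eq_bigr => q _; under eq_bigr do rewrite /W -big_distrr -big_distrl /=.
  by rewrite -big_distrr -big_distrr /= !sum_ord_indicator.
rewrite -(pair_big xpredT xpredT (fun tau mu => C (tau, mu) *
  (((des tau < a) * F (des tau)) * ((des mu < b) * G (des mu))))) /=.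
apply: eq_bigr => tau _; rewrite (bigD1 (sigma * tau^-1)%g) //= big1 ?addn0.
  by rewrite /C comp_eq_mul eqxx mul1n.
by move=> mu /negbTE mu_neq; rewrite /C comp_eq_mul mu_neq.
Qed.

Lemma lhs_coef_sum (sigma : 'S_n) a b : lhs_coef sigma a b =
  \sum_(tau : 'S_n) 'C(m + a - des tau, n) * 'C(m + b - des (sigma * tau^-1)%g, n).
Proof.
rewrite /lhs_coef (cnt_weighted_sum sigma a b (fun i => 'C(n + (a - i.+1), n))
                                               (fun j => 'C(n + (b - j.+1), n))).
by apply: eq_bigr => tau _; rewrite !coef_shifted_series.
Qed.

End Coefficients.

Theorem proposition2p1 (n : nat) (hn : 0 < n) (sigma : 'S_n) :
  forall a b : nat,
    lhs_coef sigma a b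
    = binomZ ((n + a * b)%:Z - (des sigma)%:Z - 1)%R n.
Proof.
case: n hn sigma => [//|m] _ sigma a b.
rewrite binomZ_nat ?des_le // mulnC -card_compat card_compat_mul lhs_coef_sum.
by apply: eq_bigr => tau _; rewrite !card_compat.
Qed.
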